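(* Let $G$ be a $2$-connected $\{P_k, K_m\}$-free graph of order $n\geq k$. If $G$ contains a strong dominating path $P$ such that $d(u)\geq \delta_k$ for every vertex $u\in V(G)\setminus V(P)$, then $G$ is a subgraph of $H \vee I_{n-\delta_k}$ if $k$ is even, and of $H \vee ( I_{n-\delta_k-2} \cup K_2)$ if $k$ is odd, for some $K_{m-1}$-free graph $H$ on $\delta_k$ vertices.
   Context: All graphs are finite and simple. $K_n$, $P_n$, $I_n$ denote the complete graph, the path, and the edgeless graph on $n$ vertices. For disjoint graphs $G,H$: $G\cup H$ is their disjoint union and $G\vee H$ is obtained from $G\cup H$ by adding all edges between $V(G)$ and $V(H)$. A graph is $\mathcal H$-free if it contains no member of $\mathcal H$ as a subgraph. $\delta_k=\lfloor k/2\rfloor-1$. A path $P$ in $G$ is a strong dominating path if $N(v)\subseteq V(P)$ for every $v\in V(G)\setminus V(P)$, where $N(v)$ is the neighbourhood of $v$ in $G$. *)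

From mathcomp Require Import all_boot.
Set Implicit Arguments. Unset Strict Implicit. Unset Printing Implicit Defensive.

Definition simple_graph (T : finType) (e : rel T) : Prop :=
  symmetric e /\ irreflexive e.

Definition subgraph (T1 T2 : finType) (e1 : rel T1) (e2 : rel T2) : Prop :=
  exists f : T1 -> T2, injective f /\ forall x y, e1 x y -> e2 (f x) (f y).

Definition path_graph (k : nat) : rel 'I_k :=
  fun i j => (i.+1 == j :> nat) || (j.+1 == i :> nat).
Definition complete_graph (m : nat) : rel 'I_m := fun i j => i != j.
Definition empty_graph (n : nat) : rel 'I_n := fun _ _ => false.

Definition gunion (A B : finType) (eA : rel A) (eB : rel B) : rel (A + B)%type :=
  fun x y => match x, y with
             | inl a, inl b => eA a b
             | inr a, inr b => eB a b
             | _, _ => false end.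
Definition gjoin (A B : finType) (eA : rel A) (eB : rel B) : rel (A + B)%type :=
  fun x y => match x, y with
             | inl a, inl b => eA a b
             | inr a, inr b => eB a b
             | _, _ => true end.

Definition P_free (k : nat) (T : finType) (e : rel T) : Prop :=
  ~ subgraph (@path_graph k) e.
Definition K_free (m : nat) (T : finType) (e : rel T) : Prop :=
  ~ subgraph (@complete_graph m) e.

Definition connected_graph (T : finType) (e : rel T) : Prop :=
  forall x y, connect e x y.

Definition two_connected (T : finType) (e : rel T) : Prop :=
  2 < #|T| /\ connected_graph e /\
  forall v x y, x != v -> y != v ->
    connect (fun a b => e a b && (a != v) && (b != v)) x y.

Definition deg (T : finType) (e : rel T) (v : T) : nat := #|[set u | e v u]|.

Definition is_gpath (T : finType) (e : rel T) (p : seq T) : bool :=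
  match p with
  | [::] => false
  | x :: s => uniq p && path e x s
  end.

Definition strong_dominating_path (T : finType) (e : rel T) (p : seq T) : Prop :=
  is_gpath e p /\ forall v, v \notin p -> forall u, e v u -> u \in p.

Definition delta (k : nat) : nat := k./2 - 1.

From mathcomp Require Import all_boot zify.
Set Implicit Arguments. Unset Strict Implicit. Unset Printing Implicit Defensive.

(* Extend the strong dominating path to a path P = q_0 ... q_(t-1) that is longest among the
   paths containing it; every vertex r off P still has all its neighbours on P. Since r cannot
   be inserted into P, it is adjacent neither to an end of P nor to two consecutive q_i, so
   d <= deg r <= (t-1)/2, while P_k-freeness gives t <= k-1 <= 2d+2. Hence t is 2d+1 or 2d+2,
   deg r = d, and N(r) = {q_1, q_3, ..., q_(2j-1), q_(2j+2), q_(2j+4), ..., q_(2d)} for some j.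
   Two vertices off P with different j would allow rerouting P into a longer path or into one
   with k vertices (2-connectivity enters only through minimum degree 2, which rules out d = 1),
   so j is common to all of them. Rerouting P along a chord then shows that the only edge
   avoiding S = N(r) can be q_(2j) q_(2j+1), and only if t = 2d+2, i.e. k is odd. So G embeds
   in the join of G[S] with I_(n-d), resp. with I_(n-d-2) u K_2, and G[S] is K_(m-1)-free
   because r is adjacent to all of S. *)

Lemma count_nth_iota (T : Type) (x0 : T) (a : pred T) s :
  count a s = count (fun i => a (nth x0 s i)) (iota 0 (size s)).
Proof. by rewrite -[in LHS](mkseq_nth x0 s) /mkseq count_map. Qed.

Lemma count_iotaSr (a : pred nat) n : count a (iota 0 n.+1) = count a (iota 0 n) + a n.
Proof. by rewrite -addn1 iotaD count_cat /= addn0. Qed.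

Lemma count_iota_ge_all (a : pred nat) d : d <= count a (iota 0 d) -> forall g, g < d -> a g.
Proof.
move=> hc g gd; have /allP : all a (iota 0 d).
  by rewrite all_count eqn_leq count_size size_iota.
by apply; rewrite mem_iota.
Qed.

Lemma count_no_consecutive (a : pred nat) n : a 0 = false ->
  (forall i, i.+1 < n -> ~~ (a i && a i.+1)) -> count a (iota 0 n) <= n./2.
Proof.
move=> a0 nc; elim/ltn_ind: n nc => [[|[|n]]] IH nc //; first by rewrite /= a0.
rewrite count_iotaSr; case an: (a n.+1); last first.
  by have := IH n.+1 (ltnSn _) (fun i hi => nc i (ltnW hi)); lia.
have an' : a n = false by move: (nc n); rewrite an andbT => /(_ (ltnSn _))/negbTE.
rewrite count_iotaSr an' addn0.
by have := IH n (ltnW (ltnSn _)) (fun i hi => nc i (ltnW (ltnW hi))); lia.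
Qed.

Lemma count_iota_pairs (a : pred nat) d : count a (iota 0 (2 * d).+1) =
  a 0 + count (fun g => a (2 * g + 1)) (iota 0 d) + count (fun g => a (2 * g + 2)) (iota 0 d).
Proof.
elim: d => [|d IH]; first by rewrite /= !addn0.
have -> : (2 * d.+1).+1 = (2 * d).+1 + 2 by lia.
rewrite iotaD count_cat IH !count_iotaSr /= addn0.
have -> : (2 * d).+1 = 2 * d + 1 by lia.
have -> : (2 * d + 1).+1 = 2 * d + 2 by lia.
by rewrite add0n; lia.
Qed.

Lemma downclosed_prefix (b : pred nat) d :
  (forall g, g.+1 < d -> b g.+1 -> b g) -> exists2 j, j <= d & forall g, g < d -> b g = (g < j).
Proof.
move=> closed; set j := find (predC b) (iota 0 d).
have jd : j <= d by rewrite -[X in _ <= X](size_iota 0 d) find_size.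
exists j => // g gd; case: ltnP => gj.
  by have := before_find 0 gj; rewrite nth_iota // add0n /= => /negbFE.
have bj : ~~ b j.
  have := nth_find 0 (a := predC b) (s := iota 0 d).
  by rewrite -/j nth_iota ?add0n; [apply; rewrite has_find size_iota; lia | lia].
move: gd; rewrite -(subnKC gj); elim: (g - j) => [|h IH] hd; first by rewrite addn0 (negbTE bj).
rewrite addnS in hd *; apply/negbTE/negP => /(closed _ hd).
by rewrite IH // ltnW.
Qed.

Lemma iota_pairs_exactly_one (a : pred nat) d : a 0 = false ->
  (forall g, g < d -> ~~ (a (2 * g + 1) && a (2 * g + 2))) -> d <= count a (iota 0 (2 * d).+1) ->
  forall g, g < d -> a (2 * g + 2) = ~~ a (2 * g + 1).
Proof.
move=> a0 nc_pair hc.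
have cnt_or : d <= count (predU (fun g => a (2 * g + 1)) (fun g => a (2 * g + 2))) (iota 0 d).
  move: hc (count_predUI (fun g => a (2 * g + 1)) (fun g => a (2 * g + 2)) (iota 0 d)).
  rewrite count_iota_pairs a0 (@eq_in_count _ (predI _ _) pred0) ?count_pred0; first lia.
  by move=> h; rewrite mem_iota => /andP[_ hd] /=; apply/negbTE/nc_pair.
move=> g gd; move: (count_iota_ge_all cnt_or gd) (nc_pair g gd) => /=.
by case: (a (2 * g + 1)); case: (a (2 * g + 2)).
Qed.

(* Positions on a longest path [q_0 ... q_(t-1)] of the neighbours of a vertex off it. *)
Definition zigzag (d j i : nat) : bool :=
  odd i && (i < 2 * j) || [&& ~~ odd i, 2 * j < i & i <= 2 * d].

Lemma zigzag_odd d j g : g < d -> zigzag d j (2 * g + 1) = (g < j).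
Proof. by move=> gd; rewrite /zigzag; apply/idP/idP; lia. Qed.

Lemma zigzag_even d j g : g < d -> zigzag d j (2 * g + 2) = (j <= g).
Proof. by move=> gd; rewrite /zigzag; apply/idP/idP; lia. Qed.

Lemma zigzag_of_count d t (a : pred nat) :
  t = (2 * d).+1 \/ t = (2 * d).+2 -> a 0 = false -> a t.-1 = false ->
  (forall i, i.+1 < t -> ~~ (a i && a i.+1)) -> d <= count a (iota 0 t) ->
  exists2 j, j <= d /\ (t = (2 * d).+1 -> j = d) & forall i, i < t -> a i = zigzag d j i.
Proof.
move=> ht a0 alast nc hc.
have nc_pair g : g < d -> ~~ (a (2 * g + 1) && a (2 * g + 2)).
  by move=> gd; rewrite (_ : 2 * g + 2 = (2 * g + 1).+1); [apply: nc|]; lia.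
have hc' : d <= count a (iota 0 (2 * d).+1).
  by move: hc alast; case: ht => -> // hc alast; rewrite count_iotaSr alast addn0 in hc.
have pair_one := iota_pairs_exactly_one a0 nc_pair hc'.
have closed g : g.+1 < d -> a (2 * g.+1 + 1) -> a (2 * g + 1).
  move=> gd ag; have := nc (2 * g + 2); rewrite (_ : (2 * g + 2).+1 = 2 * g.+1 + 1); last lia.
  by rewrite ag andbT pair_one ?negbK //; [apply; lia | lia].
have [j jd hj] := downclosed_prefix closed.
exists j.
  split=> // ht1; apply/eqP; rewrite eqn_leq jd leqNgt; apply/negP => jd'.
  have dpos : d.-1 < d by lia.
  have := pair_one _ dpos; rewrite hj // (_ : 2 * d.-1 + 2 = t.-1) ?alast; last lia.
  by rewrite (_ : d.-1 < j = false) //; apply/negbTE; lia.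
move=> i it; have [-> | i_pos] := posnP i.
  by rewrite a0; apply/esym/negbTE; rewrite /zigzag; lia.
have [g ei] : exists g, i = 2 * g + 1 \/ i = 2 * g + 2 by exists i.-1./2; lia.
case: (ltnP g d) => gd.
  case: ei => ->; first by rewrite zigzag_odd // hj.
  by rewrite zigzag_even // pair_one // hj // -leqNgt.
have -> : i = t.-1 by lia.
by rewrite alast; apply/esym/negbTE; rewrite /zigzag; lia.
Qed.

Lemma zigzag_chord d j t a b :
  (t = (2 * d).+1 /\ j = d \/ t = (2 * d).+2) -> j <= d -> a < b -> b < t ->
  ~~ zigzag d j a -> ~~ zigzag d j b -> ~ (a = 2 * j /\ b = (2 * j).+1) ->
  zigzag d j a.+1 && ((b.+1 == t) || zigzag d j b.+1) ||
  ((a == 0) || zigzag d j a.-1) && zigzag d j b.-1.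
Proof.
move=> ht jd ab bt; rewrite /zigzag.
have [x ea] : exists x, [\/ a = 0, a = (2 * x).+1 | a = (2 * x).+2].
  exists a.-1./2; case: (posnP a) => [->|a_pos]; first by constructor 1.
  by case: (boolP (odd a.-1)) => h; [constructor 3 | constructor 2]; lia.
have [y eb] : exists y, b = (2 * y).+1 \/ b = (2 * y).+2.
  by exists b.-1./2; case: (boolP (odd b.-1)) => h; [right | left]; lia.
by case: ea => ea; case: eb => eb; subst a b; rewrite /= !oddM /=; lia.
Qed.

Section SymmetricPaths.
Variables (T : eqType) (e : rel T).
Hypothesis e_sym : symmetric e.

Lemma sorted_rev_sym s : sorted e (rev s) = sorted e s.
Proof.
rewrite rev_sorted; case: s => //= x s.
by apply: eq_path => a b; rewrite e_sym.
Qed.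

Lemma sorted_splice A x B y C :
  sorted e (rcons A x) -> sorted e B -> B != [::] ->
  e x (last x B) -> e (head x B) y -> path e y C ->
  sorted e (A ++ x :: rev B ++ y :: C).
Proof.
move=> sAx sB nB exB eBy pyC; rewrite sorted_cat_cons sAx /= cat_path /= pyC andbT.
case/lastP: B sB nB exB eBy => // B b sBb _; rewrite last_rcons rev_rcons /= => -> /=.
rewrite -sorted_rev_sym rev_rcons /= in sBb; rewrite sBb.
by case: B {sBb} => // c B; rewrite rev_cons last_rcons.
Qed.

End SymmetricPaths.

Section Slices.
Variables (T : Type) (P : seq T).
Local Notation t := (size P).

Definition slice a b := take (b - a) (drop a P).

Lemma size_slice a b : b <= t -> size (slice a b) = b - a.
Proof. by move=> bt; rewrite size_take size_drop; case: ifP; lia. Qed.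

Lemma nth_slice a b i z : i < b - a -> nth z (slice a b) i = nth z P (a + i).
Proof. by move=> hi; rewrite nth_take // nth_drop. Qed.

Lemma drop_slice a b : a <= b -> drop a P = slice a b ++ drop b P.
Proof.
move=> ab; rewrite /slice -{1}(cat_take_drop (b - a) (drop a P)) drop_drop.
by congr (_ ++ drop _ _); lia.
Qed.

End Slices.

Section PathSlices.
Variables (T : eqType) (e : rel T) (x0 : T) (P : seq T).
Hypotheses (e_sym : symmetric e) (P_sorted : sorted e P).
Local Notation t := (size P).
Local Notation q i := (nth x0 P i).
Local Notation slice := (slice P).

Lemma sorted_rcons_take a y : a <= t -> (a = 0 \/ e (q a.-1) y) -> sorted e (rcons (take a P) y).
Proof.
case: a => [_ _|a a_le [//|/= ea]]; first by rewrite take0.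
have := take_sorted a.+1 P_sorted; rewrite (take_nth x0) //.
by case: (take a P) => [|z s] /=; [rewrite ea | rewrite !rcons_path last_rcons ea andbT].
Qed.

Lemma path_drop b y : b <= t -> (b = t \/ e y (q b)) -> path e y (drop b P).
Proof.
move=> bt; case: (ltnP b t) => [b_lt [b_eq|eyb] | b_ge _]; first by rewrite b_eq ltnn in b_lt.
  by have := drop_sorted b P_sorted; rewrite (drop_nth x0) //= eyb.
by rewrite drop_oversize.
Qed.

Lemma path_slice y a b : a < b <= t -> e y (q a) -> path e y (slice a b).
Proof.
move=> /andP[ab bt] eya; rewrite /slice.
have -> : b - a = (b - a.+1).+1 by lia.
have := take_sorted (b - a.+1).+1 (drop_sorted a P_sorted).
rewrite (drop_nth x0) /=; last lia.
by move=> ->; rewrite eya.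
Qed.

Lemma sorted_flip A x a b y C : a < b <= t ->
  sorted e (rcons A x) -> e x (q b.-1) -> e (q a) y -> path e y C ->
  sorted e (A ++ x :: rev (slice a b) ++ y :: C).
Proof.
move=> /andP[ab bt] sAx exb eay pyC.
have size_ab : size (slice a b) = b - a by rewrite size_slice.
apply: (sorted_splice e_sym) => //.
- exact/take_sorted/drop_sorted.
- by rewrite -size_eq0 size_ab; lia.
- rewrite -nth_last size_ab nth_slice; last lia.
  have -> : a + (b - a).-1 = b.-1 by lia.
  by rewrite (set_nth_default x0) //; lia.
- by rewrite -nth0 nth_slice ?addn0 1?(set_nth_default x0) //; lia.
Qed.

End PathSlices.

Section LongestPath.
Variables (T : eqType) (e : rel T) (x0 : T) (k d : nat) (P : seq T).
Hypotheses (e_sym : symmetric e) (e_irr : irreflexive e).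
Hypotheses (P_uniq : uniq P) (P_sorted : sorted e P).
Hypothesis P_max : forall L, uniq L -> sorted e L -> {subset P <= L} -> size L <= size P.
Hypothesis path_lt_k : forall L, uniq L -> sorted e L -> size L < k.
Hypothesis P_dom : forall v, v \notin P -> forall u, e v u -> u \in P.
Hypothesis deg_ge : forall v, v \notin P -> d <= count (e v) P.
Hypothesis deg_gt1 : forall v, v \notin P -> 1 < count (e v) P.
Hypothesis k_eq : k = (2 * d).+2 \/ k = (2 * d).+3.

Local Notation t := (size P).
Local Notation q i := (nth x0 P i).
Local Notation slice := (slice P).

Lemma no_longer_path L R : R != [::] -> uniq (R ++ P) -> perm_eq L (R ++ P) -> sorted e L -> False.
Proof.
move=> R0 uRP pL sL.
have subPL : {subset P <= L} by move=> z zP; rewrite (perm_mem pL) mem_cat zP orbT.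
have uL : uniq L by rewrite (perm_uniq pL).
by have := P_max uL sL subPL; rewrite (perm_size pL) size_cat -size_eq0 in R0 *; lia.
Qed.

Lemma no_k_path L r r' M N : r \notin P -> r' \notin P -> r != r' ->
  perm_eq P (M ++ N) -> perm_eq L [:: r, r' & M] -> sorted e L -> k <= (size M).+2 -> False.
Proof.
move=> rP r'P rr' pP pL sL kM.
have uM : uniq M by move: P_uniq; rewrite (perm_uniq pP) cat_uniq => /andP[].
have MP z : z \in M -> z \in P by rewrite (perm_mem pP) mem_cat => ->.
have uL : uniq L.
  by rewrite (perm_uniq pL) /= !inE negb_or rr' (contra (MP _) rP) (contra (MP _) r'P) uM.
by have := path_lt_k uL sL; rewrite (perm_size pL) /=; lia.
Qed.

Lemma no_insertion r i : r \notin P -> i <= t ->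
  (i = 0 \/ e r (q i.-1)) -> (i = t \/ e r (q i)) -> False.
Proof.
move=> rP it ei1 ei2.
apply: (@no_longer_path (take i P ++ r :: drop i P) [:: r]); rewrite //= ?rP //.
  rewrite -[in X in perm_eq _ X](cat_take_drop i P).
  by apply/permP => z; rewrite /= !count_cat /=; lia.
rewrite sorted_cat_cons (sorted_rcons_take (x0 := x0) P_sorted) ?(path_drop (x0 := x0) P_sorted) //.
by case: ei1; [left | right; rewrite e_sym].
Qed.

Lemma outside_size_gt0 r : r \notin P -> 0 < t.
Proof. by move=> rP; move: (deg_gt1 rP) (count_size (e r) P); lia. Qed.

Lemma outside_nbr_sparse r : r \notin P -> [/\ e r (q 0) = false, e r (q t.-1) = false &
  forall i, i.+1 < t -> ~~ (e r (q i) && e r (q i.+1))].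
Proof.
move=> rP; have t_pos := outside_size_gt0 rP; split.
- by apply/negP => h; apply: (no_insertion (i := 0) rP); [|left|right].
- by apply/negP => h; apply: (no_insertion (i := t) rP); [|right|left].
- move=> i it; apply/negP => /andP[h1 h2].
  by apply: (no_insertion (i := i.+1) rP); [lia|right|right].
Qed.

Lemma outside_deg r : r \notin P ->
  count (e r) P = d /\ (t = (2 * d).+1 \/ t = (2 * d).+2 /\ k = (2 * d).+3).
Proof.
move=> rP; have [nb0 nblast nb_consec] := outside_nbr_sparse rP.
have t_pos := outside_size_gt0 rP.
have : count (e r) P <= t.-1./2.
  rewrite (count_nth_iota x0) -(prednK t_pos) count_iotaSr nblast addn0.
  by apply: count_no_consecutive => // i hi; apply: nb_consec; lia.
by have := deg_ge rP; have := path_lt_k P_uniq P_sorted; case: k_eq; lia.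
Qed.

Definition zigzag_nbr r j := forall i, i < t -> e r (q i) = zigzag d j i.

Lemma outside_zigzag r : r \notin P ->
  exists2 j, j <= d /\ (t = (2 * d).+1 -> j = d) & zigzag_nbr r j.
Proof.
move=> rP; have [nb0 nblast nb_consec] := outside_nbr_sparse rP.
have [deg_r ht] := outside_deg rP.
apply: (zigzag_of_count (a := fun i => e r (q i))) => //.
  by case: ht => [|[]]; auto.
by rewrite -count_nth_iota deg_r.
Qed.

Lemma zigzag_nbr_odd r j i : zigzag_nbr r j -> i < t -> odd i -> i < 2 * j -> e r (q i).
Proof. by move=> hr it oi ij; rewrite hr // /zigzag oi ij. Qed.

Lemma zigzag_nbr_even r j i : zigzag_nbr r j -> i < t ->
  ~~ odd i -> 2 * j < i -> i <= 2 * d -> e r (q i).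
Proof. by move=> hr it oi ji id; rewrite hr // /zigzag oi ji id orbT. Qed.

Lemma chord_succ r a b : r \notin P -> a < b -> b < t -> e (q a) (q b) ->
  e r (q a.+1) -> (b.+1 = t \/ e r (q b.+1)) -> False.
Proof.
move=> rP ab bt eab era erb.
have P_eq : P = take a P ++ q a :: slice a.+1 b.+1 ++ drop b.+1 P.
  rewrite -drop_slice; last lia.
  by rewrite -(drop_nth x0) ?cat_take_drop //; lia.
apply: (@no_longer_path (take a P ++ q a :: rev (slice a.+1 b.+1) ++ r :: drop b.+1 P) [:: r]).
- by [].
- by rewrite /= rP P_uniq.
- rewrite [in X in perm_eq _ X]P_eq.
  by apply/permP => z; rewrite /= !count_cat /= !count_cat /= count_rev; lia.
apply: (sorted_flip (x0 := x0) e_sym P_sorted); first lia.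
- by rewrite -(take_nth x0) ?take_sorted //; lia.
- by [].
- by rewrite e_sym.
- exact: (path_drop (x0 := x0) P_sorted bt erb).
Qed.

Lemma chord_pred r a b : r \notin P -> a < b -> b < t -> e (q a) (q b) ->
  (a = 0 \/ e r (q a.-1)) -> e r (q b.-1) -> False.
Proof.
move=> rP ab bt eab era erb.
have P_eq : P = take a P ++ slice a b ++ q b :: drop b.+1 P.
  by rewrite -(drop_nth x0) // -drop_slice ?cat_take_drop //; lia.
apply: (@no_longer_path (take a P ++ r :: rev (slice a b) ++ q b :: drop b.+1 P) [:: r]).
- by [].
- by rewrite /= rP P_uniq.
- rewrite [in X in perm_eq _ X]P_eq.
  by apply/permP => z; rewrite /= !count_cat /= !count_cat /= count_rev; lia.
apply: (sorted_flip (x0 := x0) e_sym P_sorted); first lia.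
- apply: (sorted_rcons_take (x0 := x0) P_sorted); first lia.
  by case: era; [left | right; rewrite e_sym].
- by [].
- by [].
- by have := drop_sorted b P_sorted; rewrite (drop_nth x0).
Qed.

Lemma no_far_zigzag_pair r1 r2 j1 j2 : r1 \notin P -> r2 \notin P -> r1 != r2 ->
  t = (2 * d).+2 -> zigzag_nbr r1 j1 -> zigzag_nbr r2 j2 -> j1.+2 <= j2 -> j2 <= d -> False.
Proof.
move=> r1P r2P r12 ht h1 h2 j12 j2d.
pose L := take (2 * j1 + 2) P ++ r2 :: rev (slice (2 * j1 + 2) (2 * j2)) ++ r1 :: drop (2 * j2) P.
apply: (@no_longer_path L [:: r2; r1]).
- by [].
- by rewrite /= !inE negb_or eq_sym r12 r1P r2P P_uniq.
- rewrite -[in X in perm_eq _ X](cat_take_drop (2 * j1 + 2) P).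
  rewrite (drop_slice P (b := 2 * j2)); last lia.
  by apply/permP => z; rewrite /L /= !count_cat /= !count_cat /= count_rev; lia.
apply: (sorted_flip (x0 := x0) e_sym P_sorted); first lia.
- apply: (sorted_rcons_take (x0 := x0) P_sorted); first lia.
  by right; rewrite e_sym; apply: (zigzag_nbr_odd h2); lia.
- by apply: (zigzag_nbr_odd h2); lia.
- by rewrite e_sym; apply: (zigzag_nbr_even h1); lia.
- apply: (path_drop (x0 := x0) P_sorted); first lia.
  by right; apply: (zigzag_nbr_even h1); lia.
Qed.

Lemma no_next_zigzag_pair_low r1 r2 j : r1 \notin P -> r2 \notin P -> r1 != r2 ->
  t = (2 * d).+2 -> k = (2 * d).+3 -> zigzag_nbr r1 j -> zigzag_nbr r2 j.+1 -> j.+2 <= d -> False.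
Proof.
move=> r1P r2P r12 ht hk h1 h2 jd.
pose M := take (2 * j + 2) P ++ slice (2 * j + 2) (2 * j + 4) ++ slice (2 * j + 4) (2 * d + 1).
pose L := take (2 * j + 2) P ++ r2 :: rev (slice (2 * j + 4) (2 * d + 1)) ++
          r1 :: slice (2 * j + 2) (2 * j + 4).
apply: (@no_k_path L r2 r1 M (drop (2 * d + 1) P)); rewrite 1?eq_sym //.
- rewrite /M -!catA -drop_slice; last lia.
  by rewrite -drop_slice ?cat_take_drop; last lia.
- by apply/permP => z; rewrite /L /M /= !count_cat /= !count_cat /= count_rev; lia.
- apply: (sorted_flip (x0 := x0) e_sym P_sorted); first lia.
  + apply: (sorted_rcons_take (x0 := x0) P_sorted); first lia.
    by right; rewrite e_sym; apply: (zigzag_nbr_odd h2); lia.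
  + by apply: (zigzag_nbr_even h2); lia.
  + by rewrite e_sym; apply: (zigzag_nbr_even h1); lia.
  + by apply: (path_slice (x0 := x0) P_sorted); [lia | apply: (zigzag_nbr_even h1); lia].
- by rewrite /M !size_cat size_takel ?size_slice; lia.
Qed.

Lemma no_next_zigzag_pair_high r1 r2 j : r1 \notin P -> r2 \notin P -> r1 != r2 ->
  t = (2 * d).+2 -> k = (2 * d).+3 -> zigzag_nbr r1 j -> zigzag_nbr r2 j.+1 -> 0 < j < d -> False.
Proof.
move=> r1P r2P r12 ht hk h1 h2 jd.
pose M := take (2 * j - 2) P ++ slice (2 * j - 1) (2 * j + 2) ++ drop (2 * j + 2) P.
pose L := take (2 * j - 2) P ++ r2 :: rev (slice (2 * j - 1) (2 * j + 2)) ++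
          r1 :: drop (2 * j + 2) P.
apply: (@no_k_path L r2 r1 M [:: q (2 * j - 2)]); rewrite 1?eq_sym //.
- rewrite -[in X in perm_eq X _](cat_take_drop (2 * j - 2) P) (drop_nth x0); last lia.
  rewrite (drop_slice P (b := 2 * j + 2)); last lia.
  have -> : (2 * j - 2).+1 = 2 * j - 1 by lia.
  by apply/permP => z; rewrite /M /= !count_cat /= !count_cat /=; lia.
- by apply/permP => z; rewrite /L /M /= !count_cat /= !count_cat /= count_rev; lia.
- apply: (sorted_flip (x0 := x0) e_sym P_sorted); first lia.
  + apply: (sorted_rcons_take (x0 := x0) P_sorted); first lia.
    case: (ltnP j 2) => j2; [left | right; rewrite e_sym; apply: (zigzag_nbr_odd h2)]; lia.
  + by apply: (zigzag_nbr_odd h2); lia.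
  + by rewrite e_sym; apply: (zigzag_nbr_odd h1); lia.
  + apply: (path_drop (x0 := x0) P_sorted); first lia.
    by right; apply: (zigzag_nbr_even h1); lia.
- by rewrite /M !size_cat size_takel ?size_slice ?size_drop; lia.
Qed.

Lemma zigzag_nbr_unique r1 r2 j1 j2 : r1 \notin P -> r2 \notin P -> t = (2 * d).+2 ->
  zigzag_nbr r1 j1 -> zigzag_nbr r2 j2 -> j1 <= d -> j2 <= d -> j1 = j2.
Proof.
wlog j12 : r1 r2 j1 j2 / j1 < j2.
  move=> wlog r1P r2P ht h1 h2 j1d j2d; case: (ltngtP j1 j2) => // j12.
  - exact: (wlog r1 r2 j1 j2).
  - exact/esym/(wlog r2 r1 j2 j1).
move=> r1P r2P ht h1 h2 j1d j2d; exfalso.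
have [deg_r1 [|[_ hk]]] := outside_deg r1P; first lia.
have d_gt1 : 1 < d by rewrite -deg_r1 deg_gt1.
have r12 : r1 != r2.
  by apply/eqP => r12; have := h1 (2 * j1 + 1); rewrite r12 h2 ?zigzag_odd; lia.
case: (ltnP j1.+1 j2) => [far | near].
  exact: (no_far_zigzag_pair r1P r2P r12 ht h1 h2 far j2d).
have ej : j2 = j1.+1 by lia.
subst j2; case: (posnP j1) => [j1_0 | j1_pos].
  by apply: (no_next_zigzag_pair_low r1P r2P r12 ht hk h1 h2); lia.
by apply: (no_next_zigzag_pair_high r1P r2P r12 ht hk h1 h2); lia.
Qed.

Lemma zigzag_uniform r0 : r0 \notin P ->
  exists2 j, j <= d /\ (t = (2 * d).+1 -> j = d) & forall r, r \notin P -> zigzag_nbr r j.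
Proof.
move=> r0P; have [j [jd jt] h0] := outside_zigzag r0P.
exists j => // r rP; have [j' [j'd j't] hr] := outside_zigzag rP.
have [_ [ht|[ht _]]] := outside_deg rP; first by rewrite jt // -(j't ht).
by rewrite (zigzag_nbr_unique r0P rP ht h0 hr jd j'd).
Qed.

Lemma nonnbr_chord r0 j a b : r0 \notin P -> j <= d -> (t = (2 * d).+1 -> j = d) ->
  zigzag_nbr r0 j -> a < b -> b < t -> e (q a) (q b) -> ~~ e r0 (q a) -> ~~ e r0 (q b) ->
  a = 2 * j /\ b = (2 * j).+1.
Proof.
move=> r0P jd jt h0 ab bt eab; rewrite !h0 //; last lia.
move=> na nb; case: (boolP ((a == 2 * j) && (b == (2 * j).+1))) => [/andP[/eqP -> /eqP ->] //|gap].
have ht : t = (2 * d).+1 /\ j = d \/ t = (2 * d).+2.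
  by have [_ [h|[h _]]] := outside_deg r0P; [left; split; [|apply: jt] | right].
have not_gap : ~ (a = 2 * j /\ b = (2 * j).+1) by move=> [ea eb]; rewrite ea eb !eqxx in gap.
exfalso; case/orP: (zigzag_chord ht jd ab bt na nb not_gap) => /andP[za zb].
- apply: (chord_succ r0P ab bt eab); first by rewrite h0 //; lia.
  case: (ltngtP b.+1 t) => [lt | gt | eq]; [right; rewrite h0 // | lia | by left].
  by case/orP: zb => // /eqP; lia.
- apply: (chord_pred r0P ab bt eab); last by rewrite h0 //; lia.
  by case/orP: za => [/eqP | zpred]; [left | right; rewrite h0 //; lia].
Qed.

Lemma nonnbr_edge r0 j x y : r0 \notin P -> j <= d -> (t = (2 * d).+1 -> j = d) ->
  (forall r, r \notin P -> zigzag_nbr r j) -> ~~ e r0 x -> ~~ e r0 y -> e x y ->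
  (2 * j).+1 < t /\ (x = q (2 * j) /\ y = q (2 * j).+1 \/ x = q (2 * j).+1 /\ y = q (2 * j)).
Proof.
move=> r0P jd jt hz nx ny exy.
have nbrE r u : r \notin P -> u \in P -> e r u = zigzag d j (index u P).
  by move=> rP uP; rewrite -{1}(nth_index x0 uP) hz // index_mem.
have [xP | xP] := boolP (x \in P); last first.
  have yP := P_dom xP exy.
  by move: ny; rewrite (nbrE _ _ r0P yP) -(nbrE _ _ xP yP) exy.
have [yP | yP] := boolP (y \in P); last first.
  by move: nx; rewrite (nbrE _ _ r0P xP) -(nbrE _ _ yP xP) e_sym exy.
rewrite -(nth_index x0 xP) -(nth_index x0 yP) in nx ny exy *.
have := index_mem x P; have := index_mem y P; rewrite xP yP.
case: (ltngtP (index x P) (index y P)) => [xy | yx | xy] yt xt.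
- have [ex ey] := nonnbr_chord r0P jd jt (hz _ r0P) xy yt exy nx ny.
  by rewrite ex ey in yt *; split; [|left].
- rewrite e_sym in exy; have [ey ex] := nonnbr_chord r0P jd jt (hz _ r0P) yx xt exy ny nx.
  by rewrite ex ey in xt *; split; [|right].
- by rewrite xy e_irr in exy.
Qed.

Lemma outside_nbr_structure r0 : r0 \notin P -> count (e r0) P = d /\
  exists u v, [/\ u != v, ~~ e r0 u, ~~ e r0 v &
  forall x y, ~~ e r0 x -> ~~ e r0 y -> e x y -> odd k /\ (x = u /\ y = v \/ x = v /\ y = u)].
Proof.
move=> r0P; have [j [jd jt] hz] := zigzag_uniform r0P.
have [nb0 nblast _] := outside_nbr_sparse r0P.
have [deg_r0 [ht | [ht hk]]] := outside_deg r0P; split=> //.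
- have d_pos : 0 < d by rewrite -deg_r0 ltnW // deg_gt1.
  exists (q 0), (q t.-1); split; rewrite ?nb0 ?nblast //.
    by rewrite nth_uniq //; lia.
  by move=> x y nx ny /(nonnbr_edge r0P jd jt hz nx ny) []; rewrite jt //; lia.
- have zgap i : i < t -> ~~ zigzag d j i -> ~~ e r0 (q i) by move=> it; rewrite hz.
  exists (q (2 * j)), (q (2 * j).+1); split.
  + by rewrite nth_uniq //; lia.
  + by apply: zgap; rewrite /zigzag; lia.
  + by apply: zgap; rewrite /zigzag; lia.
  + move=> x y nx ny /(nonnbr_edge r0P jd jt hz nx ny) [_ xy].
    by split => //; rewrite hk; lia.
Qed.

End LongestPath.

Definition either (A B C : Type) (f : A -> C) (g : B -> C) (z : A + B) : C :=
  match z with inl a => f a | inr b => g b end.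

Lemma either_inj (A B C : eqType) (f : A -> C) (g : B -> C) :
  injective f -> injective g -> (forall a b, f a != g b) -> injective (either f g).
Proof.
move=> f_inj g_inj fg [a|b] [a'|b'] //=.
- by move/f_inj ->.
- by move/eqP; rewrite (negbTE (fg _ _)).
- by move/esym/eqP; rewrite (negbTE (fg _ _)).
- by move/g_inj ->.
Qed.

Section FiniteGraphs.
Variables (T : finType) (e : rel T).

Definition induced d (s : 'I_d -> T) : rel 'I_d := fun i j => e (s i) (s j).

Lemma exists_notin (s : seq T) : size s < #|T| -> exists x, x \notin s.
Proof.
move=> lt; apply/existsP; rewrite -negb_forall; apply: contraTN lt => /forallP sT.
rewrite -leqNgt (leq_trans _ (card_size s)) // subset_leq_card //.
by apply/subsetP => x _; apply: sT.
Qed.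

Lemma enum_set_ord (A : {set T}) c :
  #|A| = c -> exists f : 'I_c -> T, injective f /\ forall i, f i \in A.
Proof.
move=> cA; exists (fun i => enum_val (cast_ord (esym cA) i)).
split=> [i j|i]; last exact: enum_valP.
by move/enum_val_inj/cast_ord_inj.
Qed.

Lemma deg_count v P : uniq P -> (forall u, e v u -> u \in P) -> deg e v = count (e v) P.
Proof.
move=> P_uniq nbrP; rewrite /deg -size_filter -(card_uniqP (filter_uniq _ P_uniq)).
by apply: eq_card => u; rewrite inE mem_filter; case evu: (e v u) => //=; rewrite nbrP.
Qed.

Lemma max_path_extension P0 : is_gpath e P0 ->
  exists P, [/\ uniq P, sorted e P, {subset P0 <= P} &
    forall L, uniq L -> sorted e L -> {subset P <= L} -> size L <= size P].
Proof.
move=> P0_path; have [P0_uniq P0_sorted] : uniq P0 /\ sorted e P0.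
  by case: P0 P0_path => //= x s /andP[].
pose ext n := [exists p : n.-tuple T, [&& uniq p, sorted e p & all (mem p) P0]].
have ext_P0 : ext (size P0).
  by apply/existsP; exists (in_tuple P0); rewrite P0_uniq P0_sorted; apply/allP.
have ext_le n : ext n -> n <= #|T|.
  by case/existsP => p /and3P[p_uniq _ _]; rewrite -(size_tuple p) -(card_uniqP p_uniq) max_card.
case: (ex_maxnP (ex_intro ext _ ext_P0) ext_le) => n.
move=> /existsP[p /and3P[p_uniq p_sorted /allP P0p]] n_max.
exists p; split=> // L L_uniq L_sorted pL; rewrite size_tuple n_max //.
by apply/existsP; exists (in_tuple L); rewrite L_uniq L_sorted; apply/allP => x /P0p /pL.
Qed.

Hypotheses (e_sym : symmetric e) (e_irr : irreflexive e).

Lemma Pfree_size_path k p : uniq p -> sorted e p -> P_free k e -> size p < k.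
Proof.
case: p => [|x0 p] p_uniq p_sorted Pf; rewrite ltnNge; apply/negP => k_le; apply: Pf.
  rewrite leqn0 in k_le; rewrite (eqP k_le).
  by exists (ffun0 (card_ord 0) : {ffun 'I_0 -> T}); split => -[].
exists (fun i : 'I_k => nth x0 (x0 :: p) i); split.
  move=> i j /eqP; rewrite nth_uniq ?(leq_trans (ltn_ord _) k_le) //.
  by move/eqP/val_inj.
move=> i j /orP[] /eqP ij.
  by rewrite -ij; apply: (pathP x0 p_sorted); rewrite /= -ltnS ij (leq_trans (ltn_ord j) k_le).
by rewrite e_sym -ij; apply: (pathP x0 p_sorted); rewrite /= -ltnS ij (leq_trans (ltn_ord i) k_le).
Qed.

Lemma two_connected_deg_gt1 : two_connected e -> forall v, 1 < deg e v.
Proof.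
move=> [T_gt2 [_ conn_minus]] v; rewrite ltnNge; apply/negP => /card_le1_eqP N_le1.
have [u [uv Nv_u]] : exists u, u != v /\ forall x, e v x -> x = u.
  case: (set_0Vmem [set x | e v x]) => [N0 | [u evu]].
    have [u] : exists u, u \notin [:: v] by apply/exists_notin/ltnW.
    rewrite inE => uv; exists u; split=> // x evx.
    by have := in_set0 x; rewrite -N0 inE evx.
  rewrite inE in evu; exists u; split; first by apply: contraTneq evu => ->; rewrite e_irr.
  by move=> x evx; apply: N_le1; rewrite inE.
have [w] : exists w, w \notin [:: u; v] by apply: exists_notin.
rewrite !inE negb_or => /andP[wu wv].
have vu : v != u by rewrite eq_sym.
have /connectP[[|y p] /= pth w_eq] := conn_minus u v w vu wu.
  by rewrite w_eq eqxx in wv.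
by case/andP: pth => /andP[/andP[/Nv_u -> _]]; rewrite eqxx.
Qed.

Lemma K_free_induced m d (s : 'I_d -> T) r : injective s -> (forall i, e r (s i)) ->
  K_free m e -> K_free m.-1 (induced s).
Proof.
move=> s_inj rs Kf [g [g_inj gE]]; apply: Kf.
case: m g g_inj gE => [|m] g g_inj gE.
  by exists (fun _ => r); split=> -[].
exists (fun i => if unlift ord_max i is Some i' then s (g i') else r); split.
  move=> i j; case: unliftP => [i' ->|->]; case: unliftP => [j' ->|->] //.
  - by move/s_inj/g_inj ->.
  - by move=> sr; have := rs (g i'); rewrite -sr e_irr.
  - by move=> rs'; have := rs (g j'); rewrite rs' e_irr.
move=> i j; rewrite /complete_graph; case: unliftP => [i' ->|->]; case: unliftP => [j' ->|->] //.
- by move=> ij; apply: gE; apply: contraNneq ij => ->.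
- by rewrite e_sym.
- by rewrite eqxx.
Qed.

Lemma subgraph_join_induced d (s : 'I_d -> T) (B : finType) (eB : rel B) (h : B -> T) :
  injective s -> injective h -> (forall i b, s i != h b) -> #|T| <= d + #|B| ->
  (forall a b, e (h a) (h b) -> eB a b) -> subgraph e (gjoin (induced s) eB).
Proof.
move=> s_inj h_inj sh cardT hE.
have [f _ fK] : bijective (either s h).
  by apply: inj_card_bij (either_inj s_inj h_inj sh) _; rewrite card_sum card_ord.
exists f; split; first exact: can_inj fK.
move=> x y; rewrite -{1}(fK x) -{1}(fK y).
by case: (f x) => [i|a]; case: (f y) => [j|b] //= /hE.
Qed.

Lemma subgraph_join_empty d n (S : {set T}) (s : 'I_d -> T) :
  injective s -> (forall i, s i \in S) -> #|S| = d -> #|T| = n ->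
  (forall x y, x \notin S -> y \notin S -> ~~ e x y) ->
  subgraph e (gjoin (induced s) (@empty_graph (n - d))).
Proof.
move=> s_inj sS cardS cardT indep.
have [h [h_inj hS]] : exists h : 'I_(n - d) -> T, injective h /\ forall i, h i \in ~: S.
  by apply: enum_set_ord; rewrite cardsCs setCK cardT cardS.
apply: (subgraph_join_induced s_inj h_inj).
- by move=> i b; apply: contraTneq (hS b) => <-; rewrite inE sS.
- by rewrite card_ord subnKC -cardT // -cardS; exact: max_card.
- by move=> a b; move: (hS a) (hS b); rewrite !inE => ha hb; rewrite (negbTE (indep _ _ ha hb)).
Qed.

Lemma subgraph_join_K2 d n (S : {set T}) (s : 'I_d -> T) u v :
  injective s -> (forall i, s i \in S) -> #|S| = d -> #|T| = n ->
  u != v -> u \notin S -> v \notin S ->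
  (forall x y, x \notin S -> y \notin S -> e x y -> x = u /\ y = v \/ x = v /\ y = u) ->
  subgraph e (gjoin (induced s) (gunion (@empty_graph (n - d - 2)) (@complete_graph 2))).
Proof.
move=> s_inj sS cardS cardT uv uS vS edges.
have cardCS : #|~: S| = n - d by rewrite cardsCs setCK cardT cardS.
have [w [w_inj wD]] : exists w : 'I_(n - d - 2) -> T,
    injective w /\ forall i, w i \in ~: S :\ u :\ v.
  apply: enum_set_ord; move: (cardsD1 u (~: S)) (cardsD1 v (~: S :\ u)).
  by rewrite !inE uS vS eq_sym uv /= cardCS; lia.
have [p [p_inj p_uv]] : exists p : 'I_2 -> T, injective p /\ forall i, p i \in [set u; v].
  by apply: enum_set_ord; rewrite cards2 uv.
have w_uv a : w a \notin [set u; v].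
  by move: (wD a); rewrite !inE negb_or => /and3P[-> -> _].
have p_S b : p b \notin S by move: (p_uv b); rewrite !inE => /orP[] /eqP ->.
have h_S z : either w p z \notin S.
  by case: z => [a|b] /=; [move: (wD a); rewrite !inE => /and3P[] | exact: p_S].
apply: (subgraph_join_induced s_inj (h := either w p)).
- apply: either_inj => // a b; apply: contraNneq (w_uv a) => ->; exact: p_uv.
- by move=> i z; apply: contraTneq (h_S z) => <-; rewrite sS.
- have d_le_n : d <= n by rewrite -cardS -cardT; exact: max_card.
  by rewrite card_sum !card_ord cardT; lia.
move=> x y exy.
have [xuv yuv] : either w p x \in [set u; v] /\ either w p y \in [set u; v].
  by case: (edges _ _ (h_S x) (h_S y) exy) => -[-> ->]; rewrite !inE !eqxx ?orbT.
case: x y exy xuv yuv => [a|i] [b|j] //= exy; rewrite ?(negbTE (w_uv _)) //.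
by move=> _ _; rewrite /complete_graph; apply: contraTneq exy => ->; rewrite e_irr.
Qed.

End FiniteGraphs.

Lemma delta_cases k : 1 < k -> k = (2 * delta k).+2 \/ k = (2 * delta k).+3.
Proof. by rewrite /delta; lia. Qed.

Theorem lemma3p2 (k m n : nat) (T : finType) (e : rel T) :
  simple_graph e -> two_connected e ->
  P_free k e -> K_free m e ->
  #|T| = n -> k <= n ->
  (exists p : seq T, strong_dominating_path e p /\
     forall u, u \notin p -> delta k <= deg e u) ->
  exists H : rel 'I_(delta k),
    simple_graph H /\ K_free m.-1 H /\
    (if ~~ odd k
     then subgraph e (gjoin H (@empty_graph (n - delta k)))
     else subgraph e (gjoin H (gunion (@empty_graph (n - delta k - 2))
                                        (@complete_graph 2)))).
Proof.
move=> [e_sym e_irr] conn2 Pfree Kfree cardT k_le_n [P0 [[P0_path P0_dom] P0_deg]].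
have [P [P_uniq P_sorted P0P P_max]] := max_path_extension P0_path.
have path_lt_k L : uniq L -> sorted e L -> size L < k by move=> *; exact: Pfree_size_path.
have P_dom v : v \notin P -> forall u, e v u -> u \in P.
  by move=> vP u /(P0_dom v (contra (P0P v) vP)) /P0P.
have [r0 r0P] : exists r0, r0 \notin P.
  by apply: exists_notin; rewrite cardT (leq_trans _ k_le_n) ?path_lt_k.
have k_eq := delta_cases (path_lt_k [:: r0] isT isT).
have deg_ge v : v \notin P -> delta k <= count (e v) P.
  by move=> vP; rewrite -(deg_count P_uniq (P_dom v vP)) P0_deg // (contra (P0P v) vP).
have deg_gt1 v : v \notin P -> 1 < count (e v) P.
  by move=> vP; rewrite -(deg_count P_uniq (P_dom v vP)) two_connected_deg_gt1.
have [deg_r0 [u [v [uv r0u r0v edges]]]] := outside_nbr_structure r0 e_sym e_irr P_uniq P_sorted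
  P_max path_lt_k P_dom deg_ge deg_gt1 k_eq r0P.
have notinS x : (x \notin [set y | e r0 y]) = ~~ e r0 x by rewrite inE.
have cardS : #|[set y | e r0 y]| = delta k by rewrite -deg_r0 -(deg_count P_uniq (P_dom r0 r0P)).
have [s [s_inj sS]] := enum_set_ord cardS.
exists (induced e s); split; [|split].
- by split=> [i j | i]; [exact: e_sym | exact: e_irr].
- by apply: (K_free_induced (r := r0) e_sym e_irr s_inj _ Kfree) => i; move: (sS i); rewrite inE.
case: ifP => k_even.
  apply: (subgraph_join_empty s_inj sS cardS cardT) => x y; rewrite !notinS => nx ny.
  by apply/negP => /(edges _ _ nx ny) []; rewrite (negbTE k_even).
apply: (subgraph_join_K2 e_irr s_inj sS cardS cardT uv); rewrite ?notinS // => x y.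
by rewrite !notinS => nx ny /(edges _ _ nx ny) [].
Qed.
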